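(* Let $N\subset\mathbb{R}^d$ be compact and convex, and let $f_n,f:N\to\mathbb{R}$ ($n\in\mathbb{N}$) be convex functions. Extend them to $\mathbb{R}^d$ by $f_{n,N}=f_n+O_N$ and $f_N=f+O_N$. Assume that $f_N^*$ is differentiable on $\mathbb{R}^d$ with $\nabla f_N^*:\mathbb{R}^d\to N$ continuous, and that there is a compact set $M\subset\mathbb{R}^d$ with $\nabla f_N^*(M)=N$. Then $$\sup_{y\in N}|f_n(y)-f(y)|\to0\ \Longrightarrow\ \sup_{x\in\mathbb{R}^d}\ \sup_{y\in\partial f_{n,N}^*(x)}\big\|y-\nabla f_N^*(x)\big\|\to0 .$$
   Context: $O_N(y)=0$ for $y\in N$ and $O_N(y)=+\infty$ otherwise. For $g:\mathbb{R}^d\to\mathbb{R}\cup\{+\infty\}$, the Legendre transform is $g^*(x)=\sup_{y\in\mathbb{R}^d}(\langle x,y\rangle-g(y))$, and $\partial g^*(x)=\{y:\ g^*(z)\ge g^*(x)+\langle y,z-x\rangle\ \forall z\}$ is the convex subdifferential. *)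

From Stdlib Require Import Reals ClassicalEpsilon.
From mathcomp Require Import all_boot.

Set Implicit Arguments.
Unset Strict Implicit.

Local Open Scope R_scope.

Definition vec (d : nat) := 'I_d -> R.

Definition vadd {d} (x y : vec d) : vec d := fun i => x i + y i.
Definition vsub {d} (x y : vec d) : vec d := fun i => x i - y i.
Definition vscale {d} (t : R) (x : vec d) : vec d := fun i => t * x i.

Definition inner {d} (x y : vec d) : R := \big[Rplus/0]_(i < d) (x i * y i).
Definition vnorm {d} (x : vec d) : R := sqrt (inner x x).

Definition convex_set {d} (N : vec d -> Prop) : Prop :=
  forall x y t, N x -> N y -> 0 <= t <= 1 ->
    N (vadd (vscale t x) (vscale (1 - t) y)).

Definition convex_on {d} (N : vec d -> Prop) (f : vec d -> R) : Prop :=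
  forall x y t, N x -> N y -> 0 <= t <= 1 ->
    f (vadd (vscale t x) (vscale (1 - t) y)) <= t * f x + (1 - t) * f y.

Definition vconv {d} (u : nat -> vec d) (l : vec d) : Prop :=
  forall eps, eps > 0 -> exists n0, forall n, (n0 <= n)%nat ->
    vnorm (vsub (u n) l) < eps.

Definition compact_set {d} (K : vec d -> Prop) : Prop :=
  forall u : nat -> vec d, (forall n, K (u n)) ->
    exists (phi : nat -> nat) (l : vec d),
      (forall n, (phi n < phi (S n))%nat) /\ K l /\ vconv (fun n => u (phi n)) l.

(* supremum of a set of reals (0 if not bounded above or empty) *)
Definition sup_or0 (E : R -> Prop) : R :=
  match excluded_middle_informative (bound E /\ exists x, E x) with
  | left H => proj1_sig (completeness E (proj1 H) (proj2 H))
  | right _ => 0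
  end.

(* Legendre transform of f_N = f + O_N :
   (f_N)^*(x) = sup_{y in N} (<x,y> - f y) *)
Definition legendreN {d} (N : vec d -> Prop) (f : vec d -> R) (x : vec d) : R :=
  sup_or0 (fun r => exists y, N y /\ r = inner x y - f y).

Definition subdiff {d} (g : vec d -> R) (x y : vec d) : Prop :=
  forall z, g z >= g x + inner y (vsub z x).

Definition has_gradient {d} (g : vec d -> R) (x G : vec d) : Prop :=
  forall eps, eps > 0 -> exists delta, delta > 0 /\ forall h : vec d,
    vnorm h < delta ->
    Rabs (g (vadd x h) - g x - inner G h) <= eps * vnorm h.

Definition vcontinuous {d} (F : vec d -> vec d) : Prop :=
  forall x eps, eps > 0 -> exists delta, delta > 0 /\ forall z,
    vnorm (vsub z x) < delta -> vnorm (vsub (F z) (F x)) < eps.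

From HB Require Import structures.
From Stdlib Require Import Reals Lra ClassicalEpsilon Classical FunctionalExtensionality.
From mathcomp Require Import all_boot.
Local Open Scope R_scope.
Set Implicit Arguments.
Unset Strict Implicit.

(* Write [g] for the transform of [f + O_N].  Once [sup_N |f_n - f| <= e/2] the transforms
   differ by at most [e/2], so a subgradient [y] of the n-th transform at [x] is an
   [e]-subgradient of [g] at [x]; such a [y] lies in [N], since [g] only grows with slopes in
   [N].  As [grad g] is uniformly continuous on the compact [M], [e]-subgradients of [g] at
   points of [M] are uniformly close to the gradient when [e] is small.  To reach a point of
   [M], write the midpoint of [y] and [grad g x] as [grad g c] with [c] in [M]: monotonicity of
   [grad g] keeps [y] an [e]-subgradient at [c], and [|y - grad g x| = 2 |y - grad g c|]. *)

HB.instance Definition _ :=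
  Monoid.isComLaw.Build R 0 Rplus (fun a b c => esym (Rplus_assoc a b c)) Rplus_comm Rplus_0_l.

Lemma Rle0_of_le_scaled a b : (forall t, 0 < t <= 1 -> a <= t * b) -> a <= 0.
Proof.
move=> H; apply: Rnot_lt_le => a_gt0.
have ab := H 1 ltac:(lra).
have t_pos : 0 < a / (2 * b) by apply: Rdiv_lt_0_compat; lra.
have t_le1 : a / (2 * b) <= 1.
  by apply: (Rmult_le_reg_r (2 * b)); [lra | rewrite /Rdiv Rmult_assoc Rinv_l; lra].
have := H _ (conj t_pos t_le1).
have -> : a / (2 * b) * b = a / 2 by field; lra.
lra.
Qed.

Lemma Rle0_of_scaled_le a e : (forall s, 0 <= s -> s * a <= e) -> a <= 0.
Proof.
move=> H; apply: Rnot_lt_le => a_gt0.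
have := H ((Rabs e + 1) / a) ltac:(apply: Rlt_le; apply: Rdiv_lt_0_compat; have := Rabs_pos e; lra).
have -> : (Rabs e + 1) / a * a = Rabs e + 1 by field; lra.
have := Rle_abs e; lra.
Qed.

Lemma Rabs_le_bounds a b : Rabs a <= b -> - b <= a <= b.
Proof. by move=> a_le; have := Rle_abs a; have := Rle_abs (- a); rewrite Rabs_Ropp; lra. Qed.

Section Euclidean.
Variable d : nat.
Implicit Types x y z : vec d.

Lemma inner_sym x y : inner x y = inner y x.
Proof. by apply: eq_bigr => i _; rewrite Rmult_comm. Qed.

Lemma inner_addl x y z : inner (vadd x y) z = inner x z + inner y z.
Proof. by rewrite /inner -big_split; apply: eq_bigr => i _; rewrite Rmult_plus_distr_r. Qed.

Lemma inner_scalel t x y : inner (vscale t x) y = t * inner x y.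
Proof.
rewrite /inner (big_morph (Rmult t) (Rmult_plus_distr_l t) (Rmult_0_r t)).
by apply: eq_bigr => i _; rewrite Rmult_assoc.
Qed.

Lemma inner_subl x y z : inner (vsub x y) z = inner x z - inner y z.
Proof.
have -> : vsub x y = vadd x (vscale (-1) y).
  by apply: functional_extensionality => i; rewrite /vsub /vadd /vscale; ring.
rewrite inner_addl inner_scalel; ring.
Qed.

Lemma inner_addr x y z : inner z (vadd x y) = inner z x + inner z y.
Proof. by rewrite inner_sym inner_addl !(inner_sym z). Qed.

Lemma inner_scaler t x y : inner y (vscale t x) = t * inner y x.
Proof. by rewrite inner_sym inner_scalel inner_sym. Qed.

Lemma inner_subr x y z : inner z (vsub x y) = inner z x - inner z y.
Proof. by rewrite inner_sym inner_subl !(inner_sym z). Qed.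

Lemma inner_ge0 x : 0 <= inner x x.
Proof. by apply: big_ind => [||i _]; [lra | move=> *; lra | nra]. Qed.

Lemma inner_self_le0 x : inner x x <= 0 -> x = (fun _ => 0).
Proof.
move=> x_le0; apply: functional_extensionality => i.
have : x i * x i <= inner x x.
  rewrite /inner (bigD1 i) //= -[X in X <= _]Rplus_0_r; apply: Rplus_le_compat_l.
  by apply: big_ind => [||j _]; [lra | move=> *; lra | nra].
by move=> xi_sq; apply: Rsqr_0_uniq; rewrite /Rsqr; nra.
Qed.

Lemma inner_0l y : inner (fun _ => 0) y = 0.
Proof. by rewrite /inner big1 // => i _; rewrite Rmult_0_l. Qed.

Lemma vnorm_ge0 x : 0 <= vnorm x.
Proof. exact: sqrt_pos. Qed.

Lemma vnorm_sq x : vnorm x * vnorm x = inner x x.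
Proof. exact/sqrt_sqrt/inner_ge0. Qed.

Lemma vnorm_scale t x : vnorm (vscale t x) = Rabs t * vnorm x.
Proof.
rewrite /vnorm inner_scalel inner_scaler -Rmult_assoc sqrt_mult; [|nra|exact: inner_ge0].
by rewrite -/(Rsqr t) sqrt_Rsqr_abs.
Qed.

(* Cauchy-Schwarz, from [0 <= |b x - a y|^2] with [a = |x|], [b = |y|]. *)
Lemma inner_le_vnorm x y : inner x y <= vnorm x * vnorm y.
Proof.
have [x_le0 | x_gt0] := Rle_lt_dec (vnorm x) 0.
  have x0 : x = (fun _ => 0) by apply: inner_self_le0; rewrite -vnorm_sq; have := vnorm_ge0 x; nra.
  by rewrite x0 inner_0l; have := vnorm_ge0 y; have := vnorm_ge0 (fun _ : 'I_d => 0); nra.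
have [y_le0 | y_gt0] := Rle_lt_dec (vnorm y) 0.
  have y0 : y = (fun _ => 0) by apply: inner_self_le0; rewrite -vnorm_sq; have := vnorm_ge0 y; nra.
  by rewrite y0 inner_sym inner_0l; have := vnorm_ge0 (fun _ : 'I_d => 0); nra.
have := inner_ge0 (vsub (vscale (vnorm y) x) (vscale (vnorm x) y)).
rewrite !inner_subl !inner_subr !inner_scalel !inner_scaler (inner_sym y x) -!vnorm_sq.
move=> h; apply: (Rmult_le_reg_l (2 * vnorm x * vnorm y)); nra.
Qed.

Lemma vnorm_triangle x y : vnorm (vadd x y) <= vnorm x + vnorm y.
Proof.
apply: Rsqr_incr_0_var; last by have := vnorm_ge0 x; have := vnorm_ge0 y; lra.
rewrite /Rsqr vnorm_sq inner_addl !inner_addr -!vnorm_sq (inner_sym y x).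
have := inner_le_vnorm x y; lra.
Qed.

Lemma vnorm_dist_triangle x y z : vnorm (vsub x z) <= vnorm (vsub x y) + vnorm (vsub y z).
Proof.
have -> : vsub x z = vadd (vsub x y) (vsub y z).
  by apply: functional_extensionality => i; rewrite /vadd /vsub; ring.
exact: vnorm_triangle.
Qed.

Lemma vnorm_dist_sym x y : vnorm (vsub x y) = vnorm (vsub y x).
Proof.
have -> : vsub x y = vscale (-1) (vsub y x).
  by apply: functional_extensionality => i; rewrite /vscale /vsub; ring.
by rewrite vnorm_scale Rabs_Ropp Rabs_R1 Rmult_1_l.
Qed.

Lemma nearest_point_variational (K : vec d -> Prop) y p y' : convex_set K -> K p ->
  (forall p', K p' -> vnorm (vsub y p) <= vnorm (vsub y p')) -> K y' ->
  inner (vsub y p) (vsub y' p) <= 0.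
Proof.
move=> K_cvx Kp p_nearest Ky'.
have le_sq t : 0 < t <= 1 -> inner (vsub y p) (vsub y p) <=
    inner (vsub (vsub y p) (vscale t (vsub y' p))) (vsub (vsub y p) (vscale t (vsub y' p))).
  move=> t01; have /p_nearest : K (vadd (vscale t y') (vscale (1 - t) p)).
    by apply: K_cvx => //; lra.
  have -> : vsub y (vadd (vscale t y') (vscale (1 - t) p)) = vsub (vsub y p) (vscale t (vsub y' p)).
    by apply: functional_extensionality => i; rewrite /vsub /vadd /vscale; ring.
  by rewrite -!vnorm_sq; have := vnorm_ge0 (vsub y p); nra.
move: le_sq; move: (vsub y p) (vsub y' p) => v w le_sq.
apply: (Rle0_of_le_scaled (b := inner w w / 2)) => t t01.
have := le_sq t t01; rewrite inner_subl !inner_subr !inner_scalel !inner_scaler (inner_sym w v).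
by move=> ?; apply: (Rmult_le_reg_l (2 * t)); nra.
Qed.

End Euclidean.

Lemma sup_or0_ge (E : R -> Prop) r : bound E -> E r -> r <= sup_or0 E.
Proof.
move=> E_bd Er; rewrite /sup_or0; case: excluded_middle_informative => [H|[]].
  by case: completeness => s [s_ub _] /=; exact: s_ub.
by split => //; exists r.
Qed.

Lemma sup_or0_le (E : R -> Prop) B : (exists r, E r) -> (forall r, E r -> r <= B) -> sup_or0 E <= B.
Proof.
move=> E_ne E_le; rewrite /sup_or0; case: excluded_middle_informative => [H|[]].
  by case: completeness => s [_ s_lub] /=; exact: s_lub.
by split => //; exists B.
Qed.

Lemma sup_or0_unbounded (E : R -> Prop) : ~ bound E -> sup_or0 E = 0.
Proof. by move=> E_unbd; rewrite /sup_or0; case: excluded_middle_informative => // - []. Qed.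

Lemma subseq_INR_ge (phi : nat -> nat) : (forall n, (phi n < phi n.+1)%nat) ->
  forall n, INR n <= INR (phi n).
Proof.
move=> phi_incr n; apply/le_INR/leP.
by elim: n => // n IH; exact: leq_ltn_trans IH (phi_incr n).
Qed.

Lemma subseq_inv_lt (phi : nat -> nat) eps : (forall n, (phi n < phi n.+1)%nat) -> eps > 0 ->
  exists n0, forall n, (n0 <= n)%nat -> / (INR (phi n) + 1) < eps.
Proof.
move=> phi_incr eps_gt0; have [n0 n0_gt] := INR_unbounded (/ eps).
exists n0 => n n0_le_n.
have : INR n0 <= INR n by apply/le_INR/leP.
have := subseq_INR_ge phi_incr n; have : 0 < / eps by apply: Rinv_0_lt_compat.
by move=> *; rewrite -[eps]Rinv_inv; apply: Rinv_lt_contravar; nra.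
Qed.

Section Compactness.
Variable d : nat.
Implicit Types (K : vec d -> Prop) (x y : vec d).

Lemma compact_bounded K : compact_set K -> exists B, forall y, K y -> vnorm y <= B.
Proof.
move=> K_cpt; apply: NNPP => unbd.
have /choice [u u_spec] : forall n, exists y, K y /\ INR n < vnorm y.
  move=> n; apply: NNPP => no_u; apply: unbd; exists (INR n) => y Ky.
  by apply: Rnot_lt_le => lt_y; apply: no_u; exists y.
have [phi [l [phi_incr [_ u_cvg]]]] := K_cpt u (fun n => proj1 (u_spec n)).
have [n0 n0_cvg] := u_cvg 1 ltac:(lra).
have [m m_big] := INR_unbounded (vnorm l + 1).
have {n0_cvg} close := n0_cvg (n0 + m)%nat (leq_addr _ _).
have := proj2 (u_spec (phi (n0 + m)%nat)).
have := subseq_INR_ge phi_incr (n0 + m)%nat.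
have := vnorm_triangle (vsub (u (phi (n0 + m)%nat)) l) l.
have -> : vadd (vsub (u (phi (n0 + m)%nat)) l) l = u (phi (n0 + m)%nat).
  by apply: functional_extensionality => i; rewrite /vadd /vsub; ring.
rewrite plus_INR; have := pos_INR n0; lra.
Qed.

Lemma compact_nearest_point K y : compact_set K -> (exists k, K k) ->
  exists p, K p /\ forall p', K p' -> vnorm (vsub y p) <= vnorm (vsub y p').
Proof.
move=> K_cpt [k Kk].
pose E r := exists p, K p /\ r = - vnorm (vsub y p).
have [L [L_ub L_lub]] : {L | is_lub E L}.
  apply: completeness; last by exists (- vnorm (vsub y k)), k.
  by exists 0 => _ [p [_ ->]]; have := vnorm_ge0 (vsub y p); lra.
have /choice [u u_spec] : forall n, exists p, K p /\ - vnorm (vsub y p) > L - / (INR n + 1).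
  move=> n; apply: NNPP => no_u.
  have : 0 < / (INR n + 1) by apply: Rinv_0_lt_compat; have := pos_INR n; lra.
  suff : L <= L - / (INR n + 1) by lra.
  apply: L_lub => _ [p [Kp ->]]; apply: Rnot_lt_le => lt_p; apply: no_u; exists p; split => //; lra.
have [phi [l [phi_incr [Kl u_cvg]]]] := K_cpt u (fun n => proj1 (u_spec n)).
exists l; split => // p' Kp'.
have : - vnorm (vsub y p') <= L by apply: L_ub; exists p'.
suff : vnorm (vsub y l) <= - L by lra.
apply: Rle_plus_epsilon => eps eps_gt0.
have [n0 n0_cvg] := u_cvg (eps / 2) ltac:(lra).
have [n1 n1_big] := subseq_inv_lt (eps := eps / 2) phi_incr ltac:(lra).
have := n0_cvg (n0 + n1)%nat (leq_addr _ _); have := n1_big (n0 + n1)%nat (leq_addl _ _).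
have := proj2 (u_spec (phi (n0 + n1)%nat)).
have := vnorm_dist_triangle y (u (phi (n0 + n1)%nat)) l.
lra.
Qed.

Lemma compact_unif_continuous (M : vec d -> Prop) (F : vec d -> vec d) :
  compact_set M -> vcontinuous F -> forall eta, eta > 0 -> exists t, t > 0 /\
    forall c h, M c -> vnorm h <= t -> vnorm (vsub (F (vadd c h)) (F c)) <= eta.
Proof.
move=> M_cpt F_cont eta eta_gt0; apply: NNPP => not_unif.
have /choice [u u_spec] : forall n, exists ch : vec d * vec d,
    [/\ M ch.1, vnorm ch.2 <= / (INR n + 1) & vnorm (vsub (F (vadd ch.1 ch.2)) (F ch.1)) > eta].
  move=> n; apply: NNPP => no_u; apply: not_unif; exists (/ (INR n + 1)).
  split; first by apply/Rlt_gt/Rinv_0_lt_compat; have := pos_INR n; lra.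
  move=> c h Mc h_le; apply: Rnot_lt_le => lt_F; apply: no_u; by exists (c, h).
have [phi [l [phi_incr [_ c_cvg]]]] :=
  M_cpt (fun n => (u n).1) (fun n => let: And3 Mc _ _ := u_spec n in Mc).
have [delta [delta_gt0 F_near_l]] := F_cont l (eta / 2) ltac:(lra).
have [n0 n0_cvg] := c_cvg (delta / 2) ltac:(lra).
have [n1 n1_big] := subseq_inv_lt (eps := delta / 2) phi_incr ltac:(lra).
have := n0_cvg (n0 + n1)%nat (leq_addr _ _); have := n1_big (n0 + n1)%nat (leq_addl _ _).
case: (u_spec (phi (n0 + n1)%nat)); case: (u (phi (n0 + n1)%nat)) => c h /= _ h_small F_far.
move=> phi_big c_close.
have ch_close : vnorm (vsub (vadd c h) l) < delta.
  have -> : vsub (vadd c h) l = vadd (vsub c l) h.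
    by apply: functional_extensionality => i; rewrite /vsub /vadd; ring.
  have := vnorm_triangle (vsub c l) h; lra.
have := F_near_l _ ch_close; have := F_near_l c ltac:(lra).
have := vnorm_dist_triangle (F (vadd c h)) (F l) (F c).
rewrite (vnorm_dist_sym (F l)); lra.
Qed.

End Compactness.

Definition eps_subgradient d (g : vec d -> R) (e : R) (x y : vec d) : Prop :=
  forall z, g z >= g x + inner y (vsub z x) - e.

Section ConvexGradient.
Variables (d : nat) (g : vec d -> R).
Hypothesis g_convex : convex_on (fun _ => True) g.

Lemma convex_gradient_subdiff x G : has_gradient g x G -> subdiff g x G.
Proof.
move=> g_grad z; set h := vsub z x.
have h_ge0 := vnorm_ge0 h.
suff : inner G h <= g z - g x by lra.
apply: Rle_plus_epsilon => eps eps_gt0.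
pose k := eps / (vnorm h + 1).
have k_gt0 : k > 0 by apply: Rlt_gt; apply: Rdiv_lt_0_compat; lra.
have k_h_le : k * vnorm h <= eps.
  apply: (Rmult_le_reg_r (vnorm h + 1)); first lra.
  have -> : k * vnorm h * (vnorm h + 1) = eps * vnorm h by rewrite /k; field; lra.
  nra.
have [delta [delta_gt0 g_taylor]] := g_grad k k_gt0.
pose s := Rmin 1 (delta / (vnorm h + 1)).
have s_gt0 : 0 < s by apply: Rmin_glb_lt; [lra | apply: Rdiv_lt_0_compat; lra].
have s_le1 : s <= 1 by apply: Rmin_l.
have s_h_lt : s * vnorm h < delta.
  have : s * (vnorm h + 1) <= delta.
    apply: (Rle_trans _ (delta / (vnorm h + 1) * (vnorm h + 1))); last by right; field; lra.
    by apply: Rmult_le_compat_r; [lra | apply: Rmin_r].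
  nra.
have step : vadd x (vscale s h) = vadd (vscale s z) (vscale (1 - s) x).
  by apply: functional_extensionality => i; rewrite /vadd /vscale /h /vsub; ring.
have := g_taylor (vscale s h); rewrite vnorm_scale Rabs_pos_eq ?inner_scaler; last lra.
move=> /(_ s_h_lt) /Rabs_le_bounds; rewrite step.
have := g_convex (x := z) (y := x) (t := s) I I ltac:(lra).
have := Rmult_le_compat_l s _ _ (Rlt_le _ _ s_gt0) k_h_le.
move=> *; apply: (Rmult_le_reg_l s) => //; nra.
Qed.

Lemma eps_subgradient_near_gradient (Gf : vec d -> vec d) (M : vec d -> Prop) :
  (forall x, has_gradient g x (Gf x)) -> vcontinuous Gf -> compact_set M ->
  forall eta, eta > 0 -> exists e, e > 0 /\
    forall c y, M c -> eps_subgradient g e c y -> vnorm (vsub y (Gf c)) <= eta.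
Proof.
move=> g_grad Gf_cont M_cpt eta eta_gt0.
have [t [t_gt0 Gf_unif]] := compact_unif_continuous M_cpt Gf_cont (eta := eta / 2) ltac:(lra).
exists (t * eta / 2); split; first by apply: Rlt_gt; apply: Rdiv_lt_0_compat; nra.
move=> c y Mc y_sub; set w := vsub y (Gf c).
apply: Rnot_lt_le => w_big.
(* Along the step [h] of length [t] in direction [w], the [e]-subgradient inequality at [c]
   and the gradient inequality at [c + h] together bound [t |w|] by [t eta]. *)
set h := vscale (t / vnorm w) w.
have h_norm : vnorm h = t.
  rewrite /h vnorm_scale Rabs_pos_eq; first by field; lra.
  by apply: Rlt_le; apply: Rdiv_lt_0_compat; lra.
have w_h : inner y h - inner (Gf c) h = t * vnorm w.
  by rewrite -inner_subl -/w /h inner_scaler -vnorm_sq; field; lra.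
have := y_sub (vadd c h).
have := convex_gradient_subdiff (g_grad (vadd c h)) c.
have -> : vsub (vadd c h) c = h by apply: functional_extensionality => i; rewrite /vsub /vadd; ring.
have -> : vsub c (vadd c h) = vscale (-1) h.
  by apply: functional_extensionality => i; rewrite /vsub /vadd /vscale; ring.
have := inner_le_vnorm (vsub (Gf (vadd c h)) (Gf c)) h.
have := Gf_unif c h Mc (Req_le _ _ h_norm).
rewrite inner_scaler inner_subl h_norm => Gf_close.
have := Rmult_le_compat_r t _ _ (Rlt_le _ _ t_gt0) Gf_close.
have := Rmult_lt_compat_l t _ _ t_gt0 w_big.
lra.
Qed.

End ConvexGradient.

Lemma eps_subgradient_midpoint d (g : vec d -> R) e x c y p :
  subdiff g x p -> subdiff g c (vadd (vscale (1 / 2) y) (vscale (1 / 2) p)) ->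
  eps_subgradient g e x y -> eps_subgradient g e c y.
Proof.
move=> p_sub q_sub y_sub z; have := y_sub z; have := p_sub c; have := q_sub x.
rewrite inner_addl !inner_scalel !inner_subr.
lra.
Qed.

Lemma subdiff_eps_subgradient_close d (g g1 : vec d -> R) e x y :
  (forall z, Rabs (g1 z - g z) <= e / 2) -> subdiff g1 x y -> eps_subgradient g e x y.
Proof.
move=> g1_close y_sub z; have := y_sub z.
have /Rabs_le_bounds := g1_close z; have /Rabs_le_bounds := g1_close x.
lra.
Qed.

Definition legendre_values d (N : vec d -> Prop) (f : vec d -> R) (x : vec d) : R -> Prop :=
  fun r => exists y, N y /\ r = inner x y - f y.

Section Legendre.
Variables (d : nat) (N : vec d -> Prop) (f : vec d -> R).
Hypothesis N_ne : exists y, N y.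
Hypothesis values_bd : forall x, bound (legendre_values N f x).

Lemma legendreN_ge x y : N y -> inner x y - f y <= legendreN N f x.
Proof. by move=> Ny; apply: sup_or0_ge; [exact: values_bd | exists y]. Qed.

Lemma legendreN_le x B : (forall y, N y -> inner x y - f y <= B) -> legendreN N f x <= B.
Proof.
move=> le_B; apply: sup_or0_le; last by move=> _ [y [Ny ->]]; exact: le_B.
by have [y Ny] := N_ne; exists (inner x y - f y), y.
Qed.

Lemma legendreN_convex : convex_on (fun _ => True) (legendreN N f).
Proof.
move=> a b t _ _ t01; apply: legendreN_le => y Ny.
rewrite inner_addl !inner_scalel.
have := legendreN_ge a Ny; have := legendreN_ge b Ny; nra.
Qed.

Lemma legendreN_close (f1 : vec d -> R) del : (forall y, N y -> Rabs (f1 y - f y) <= del) ->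
  forall x, Rabs (legendreN N f1 x - legendreN N f x) <= del.
Proof.
move=> f1_close x.
have values1_bd : forall x, bound (legendre_values N f1 x).
  move=> z; exists (legendreN N f z + del) => _ [y [Ny ->]].
  have := legendreN_ge z Ny; have := Rabs_le_bounds (f1_close y Ny); lra.
apply: Rabs_le; split.
- suff : legendreN N f x <= legendreN N f1 x + del by lra.
  apply: legendreN_le => y Ny.
  have : inner x y - f1 y <= legendreN N f1 x by apply: sup_or0_ge; [exact: values1_bd | exists y].
  have := Rabs_le_bounds (f1_close y Ny); lra.
- suff : legendreN N f1 x <= legendreN N f x + del by lra.
  apply: sup_or0_le; first by have [y Ny] := N_ne; exists (inner x y - f1 y), y.
  move=> _ [y [Ny ->]]; have := legendreN_ge x Ny; have := Rabs_le_bounds (f1_close y Ny); lra.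
Qed.

(* [y] is separated from [N] by [v = y - p], [p] the nearest point; along [v] the transform
   grows with slope [<v, p>] only, so an e-subgradient slope [<v, y>] forces [|v|^2 <= 0]. *)
Lemma eps_subgradient_legendreN_mem e x y : compact_set N -> convex_set N ->
  eps_subgradient (legendreN N f) e x y -> N y.
Proof.
move=> N_cpt N_cvx y_sub.
have [p [Np p_nearest]] := compact_nearest_point y N_cpt N_ne.
have v_sep : forall y', N y' -> inner (vsub y p) y' <= inner (vsub y p) p.
  move=> y' Ny'; have := nearest_point_variational N_cvx Np p_nearest Ny'.
  rewrite inner_subr; lra.
have v_v : inner (vsub y p) (vsub y p) = inner y (vsub y p) - inner (vsub y p) p.
  by rewrite [in LHS]inner_subl (inner_sym p).
suff /inner_self_le0 v0 : inner (vsub y p) (vsub y p) <= 0.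
  suff -> : y = p by [].
  apply: functional_extensionality => i.
  by have := f_equal (fun u => u i) v0; rewrite /vsub /=; lra.
apply: (Rle0_of_scaled_le (e := e)) => s s_ge0.
have up : legendreN N f (vadd x (vscale s (vsub y p))) <= legendreN N f x + s * inner (vsub y p) p.
  apply: legendreN_le => y' Ny'; rewrite inner_addl inner_scalel.
  have := legendreN_ge x Ny'; have := v_sep y' Ny'; nra.
have := y_sub (vadd x (vscale s (vsub y p))).
have -> : vsub (vadd x (vscale s (vsub y p))) x = vscale s (vsub y p).
  by apply: functional_extensionality => i; rewrite /vsub /vadd /vscale; ring.
rewrite inner_scaler; nra.
Qed.

End Legendre.

Lemma legendre_values_bound_shift d (N : vec d -> Prop) f B x0 x :
  (forall y, N y -> vnorm y <= B) -> bound (legendre_values N f x0) ->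
  bound (legendre_values N f x).
Proof.
move=> N_bd [B0 B0_ub]; exists (B0 + vnorm (vsub x x0) * B) => _ [y [Ny ->]].
have : inner x0 y - f y <= B0 by apply: B0_ub; exists y.
have := inner_le_vnorm (vsub x x0) y; rewrite inner_subl.
have := Rmult_le_compat_l _ _ _ (vnorm_ge0 (vsub x x0)) (N_bd y Ny).
lra.
Qed.

(* If the values were unbounded, the transform would vanish identically ([sup_or0] is [0] on
   unbounded sets), so would its gradient, and [N] would reduce to the origin, where the values
   are bounded after all. *)
Lemma legendre_values_bounded d (N : vec d -> Prop) f (G : vec d -> vec d) :
  compact_set N -> (forall x, has_gradient (legendreN N f) x (G x)) ->
  (forall y, N y -> exists x, G x = y) -> forall x, bound (legendre_values N f x).
Proof.
move=> N_cpt f_grad G_onto.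
have [B N_bd] := compact_bounded N_cpt.
suff bd0 : bound (legendre_values N f (fun _ => 0)).
  by move=> x; exact: legendre_values_bound_shift x N_bd bd0.
apply: NNPP => unbd0.
have leg0 x : legendreN N f x = 0.
  by apply: sup_or0_unbounded => /(legendre_values_bound_shift (fun _ => 0) N_bd).
have G0 x : G x = (fun _ => 0).
  have leg_cvx : convex_on (fun _ => True) (legendreN N f) by move=> *; rewrite !leg0; lra.
  apply: inner_self_le0; have := convex_gradient_subdiff leg_cvx (f_grad x) (vadd x (G x)).
  have -> : vsub (vadd x (G x)) x = G x.
    by apply: functional_extensionality => i; rewrite /vsub /vadd; ring.
  rewrite !leg0; lra.
apply: unbd0; exists (- f (fun _ => 0)) => _ [y [Ny ->]].
by have [x <-] := G_onto y Ny; rewrite G0 inner_0l; lra.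
Qed.

Unset Implicit Arguments.
Theorem lemmaA1 (d : nat) (N : vec d -> Prop) (fn : nat -> vec d -> R) (f : vec d -> R)
  (Gf : vec d -> vec d) (M : vec d -> Prop) :
  compact_set N -> convex_set N ->
  (forall n, convex_on N (fn n)) -> convex_on N f ->
  (forall x, has_gradient (legendreN N f) x (Gf x)) ->
  (forall x, N (Gf x)) -> vcontinuous Gf ->
  compact_set M -> (forall y, N y <-> exists x, M x /\ Gf x = y) ->
  (forall eps, eps > 0 -> exists n0, forall n, (n0 <= n)%nat ->
      forall y, N y -> Rabs (fn n y - f y) <= eps) ->
  (forall eps, eps > 0 -> exists n0, forall n, (n0 <= n)%nat ->
      forall x y, subdiff (legendreN N (fn n)) x y -> vnorm (vsub y (Gf x)) <= eps).
Proof.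
move=> N_cpt N_cvx _ _ f_grad Gf_N Gf_cont M_cpt N_img fn_cvg eps eps_gt0.
have N_ne : exists y, N y by exists (Gf (fun _ => 0)).
have Gf_onto : forall y, N y -> exists x, Gf x = y by move=> y /N_img [x [_ <-]]; exists x.
have values_bd := legendre_values_bounded N_cpt f_grad Gf_onto.
have g_cvx := legendreN_convex N_ne values_bd.
have Gf_sub x : subdiff (legendreN N f) x (Gf x) := convex_gradient_subdiff g_cvx (f_grad x).
have [e [e_gt0 near_Gf]] :=
  eps_subgradient_near_gradient g_cvx f_grad Gf_cont M_cpt (eta := eps / 2) ltac:(lra).
have [n0 n0_cvg] := fn_cvg (e / 2) ltac:(lra).
exists n0 => n n0_le_n x y y_sub.
have y_esub : eps_subgradient (legendreN N f) e x y.
  exact: subdiff_eps_subgradient_close (legendreN_close N_ne values_bd (n0_cvg n n0_le_n)) y_sub.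
have Ny := eps_subgradient_legendreN_mem N_ne values_bd N_cpt N_cvx y_esub.
pose q := vadd (vscale (1 / 2) y) (vscale (1 / 2) (Gf x)).
have Nq : N q.
  by have := N_cvx y (Gf x) (1 / 2) Ny (Gf_N x) ltac:(lra); have -> : 1 - 1 / 2 = 1 / 2 by field.
have [c [Mc Gc]] := proj1 (N_img q) Nq.
have q_sub : subdiff (legendreN N f) c q by rewrite -Gc.
have := near_Gf c y Mc (eps_subgradient_midpoint (Gf_sub x) q_sub y_esub).
have -> : vsub y (Gf x) = vscale 2 (vsub y (Gf c)).
  by apply: functional_extensionality => i; rewrite Gc /q /vsub /vscale /vadd; field.
rewrite vnorm_scale Rabs_pos_eq; lra.
Qed.
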